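(* For every $d \in \{2,3,4,5,7,8,9,12,16,24,56,72\}$, the sequence $\left(\left\lfloor n^6/d \right\rfloor\right)_{n \ge 1}$ is eventually prime-free.
   Context: A sequence $(a_n)_{n\ge 1}$ of positive integers is called eventually prime-free if there exists an index $n_0$ such that $a_n$ is composite for all $n \ge n_0$. (Here, as in the paper, this is understood as: only finitely many terms $a_n$ are prime.) *)

From mathcomp Require Import all_boot.

Definition eventually_prime_free (a : nat -> nat) : Prop :=
  exists n0 : nat, forall n : nat, n0 <= n -> ~~ prime (a n).

(* For each listed d, every sixth power is congruent mod d either to a square
   s^2 with s <= 8 or to 8 = 2^3.  Writing q = floor(n^6/d), in the first case
   d q = n^6 - s^2 = (n^3 - s)(n^3 + s) and in the second
   d q = n^6 - 8 = (n^2 - 2)(n^4 + 2 n^2 + 4).  Once n is large both factors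
   exceed d, and a prime q cannot satisfy d q = a b with a, b > d. *)

From mathcomp Require Import all_boot.
From mathcomp Require Import zify.

Lemma not_prime_mul_factors m d a b :
  m * d = a * b -> d < a -> d < b -> ~~ prime m.
Proof.
move=> mdE lt_da lt_db; apply/negP => m_pr.
have m_gt0 := prime_gt0 m_pr.
have : m %| a * b by rewrite -mdE dvdn_mulr.
rewrite Euclid_dvdM // => /orP[/dvdnP[k aE] | /dvdnP[k bE]].
- have dE : d = k * b.
    by apply/eqP; rewrite -(eqn_pmul2l m_gt0) mdE aE mulnCA mulnA.
  by case: k aE dE => [|k] aE dE; nia.
- have dE : d = a * k.
    by apply/eqP; rewrite -(eqn_pmul2l m_gt0) mdE bE [k * m]mulnC mulnCA.
  by case: k bE dE => [|k] bE dE; nia.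
Qed.

Lemma not_prime_divn_factors x d a b :
  x = a * b + x %% d -> d < a -> d < b -> ~~ prime (x %/ d).
Proof.
move=> xE; apply: not_prime_mul_factors.
by apply/eqP; rewrite -(eqn_add2r (x %% d)) -divn_eq -xE.
Qed.

Lemma not_prime_divn_sqr m d s :
  m ^ 2 %% d = s ^ 2 -> d + s < m -> ~~ prime (m ^ 2 %/ d).
Proof.
move=> mod_sq lt_m; apply: (@not_prime_divn_factors _ _ (m - s) (m + s)).
- by rewrite -subn_sqr mod_sq subnK // leq_exp2r //; lia.
- by lia.
- by lia.
Qed.

Lemma subn_cube m n : m ^ 3 - n ^ 3 = (m - n) * (m ^ 2 + m * n + n ^ 2).
Proof.
have [le_nm | lt_mn] := leqP n m; last first.
  have /eqP-> : m - n == 0 by rewrite subn_eq0 ltnW.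
  by apply/eqP; rewrite subn_eq0 leq_exp2r // ltnW.
move: (m - n) (subnKC le_nm) => t <-.
by rewrite (_ : (n + t) ^ 3 = t * ((n + t) ^ 2 + (n + t) * n + n ^ 2) + n ^ 3)
  ?addnK //; nia.
Qed.

Lemma not_prime_divn_cube m d c :
  m ^ 3 %% d = c ^ 3 -> d + c < m -> ~~ prime (m ^ 3 %/ d).
Proof.
move=> mod_cube lt_m.
apply: (@not_prime_divn_factors _ _ (m - c) (m ^ 2 + m * c + c ^ 2)).
- by rewrite -subn_cube mod_cube subnK // leq_exp2r //; lia.
- by lia.
- by nia.
Qed.

(* [k ^ e %% d] with every intermediate value kept below [d]: the unary
   [k ^ 6] itself is far too large to evaluate for [k] up to 71. *)
Definition expn_mod (d k e : nat) : nat := iter e (fun x => x * k %% d) (1 %% d).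

Lemma expn_modE d k e : expn_mod d k e = k ^ e %% d.
Proof.
elim: e => [|e IHe] //.
by rewrite /expn_mod iterS -/(expn_mod d k e) IHe modnMml expnSr.
Qed.

Definition sixth_power_moduli : seq nat := [:: 2; 3; 4; 5; 7; 8; 9; 12; 16; 24; 56; 72].

Lemma sixth_power_moduli_le : {in sixth_power_moduli, forall d, 0 < d <= 72}.
Proof. exact: (allP (isT : all (fun d => 0 < d <= 72) sixth_power_moduli)). Qed.

Lemma sixth_power_mod d n : d \in sixth_power_moduli ->
  n ^ 6 %% d \in 2 ^ 3 :: [seq s ^ 2 | s <- iota 0 9].
Proof.
move=> dP; have /andP[d_gt0 _] := sixth_power_moduli_le d dP.
have residues : all (fun d => all (fun k => expn_mod d k 6 \in
    2 ^ 3 :: [seq s ^ 2 | s <- iota 0 9]) (iota 0 d)) sixth_power_moduli.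
  by vm_compute.
have /allP/(_ (n %% d)) := allP residues d dP.
by rewrite expn_modE modnXm mem_iota ltn_mod d_gt0; apply.
Qed.

Theorem theorem4 (d : nat) :
  d \in [:: 2; 3; 4; 5; 7; 8; 9; 12; 16; 24; 56; 72] ->
  eventually_prime_free (fun n => n ^ 6 %/ d).
Proof.
move=> dP; exists 9 => n le9n.
have /andP[_ le_d72] := sixth_power_moduli_le d dP.
have := sixth_power_mod d n dP.
rewrite in_cons => /predU1P[mod_cube | /mapP[s s_lt9 mod_sq]].
- rewrite (_ : 6 = 2 * 3) // expnM.
  by apply: (@not_prime_divn_cube _ _ 2); rewrite -?expnM //; nia.
- rewrite mem_iota in s_lt9.
  rewrite (_ : 6 = 3 * 2) // expnM.
  by apply: (@not_prime_divn_sqr _ _ s); rewrite -?expnM //; nia.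
Qed.
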